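(* Let $(\mathcal{G},\mathcal{C})$ be an acyclic network with unit-delay links and a set of connections (sink demands) as described in the context. Suppose an assignment of local encoding coefficients (LECs) from $\mathbb{F}_{p^m}$ is a feasible network code for $(\mathcal{G},\mathcal{C})$. Let $\alpha\in\mathbb{F}_{p^a}$ (for some positive integer $a$) have multiplicative order $n$, and view the LECs as elements of $\mathbb{F}_{p^b}$, $b=\mathrm{LCM}(a,m)$. Then these LECs together with $\alpha$ form a feasible transform network code for $(\mathcal{G},\mathcal{C})$ if and only if $f(\alpha^t)\neq 0$ for all $0\le t\le n-1$, where $f(D)=\prod_{j=1}^{r}\det\big(M_j'(D)\big)$.
   Context: Network model: $\mathcal{G}=(V,E)$ is a finite directed acyclic graph (parallel links allowed); each link carries one symbol of a finite field $K$ of characteristic $p$ per time unit with a delay of one time unit. There are $s$ sources; source $i$ generates $\mu_i$ input processes; there are $r$ sinks; sink $j$ has $\nu_j$ output processes. A linear network code assigns LECs in $K$: for a link $e$ with tail $v$, $Z^{(t+1)}(e)=\sum_{l}\alpha_{l,e}X^{(t)}(v,l)+\sum_{e':\mathrm{head}(e')=v}\beta_{e',e}Z^{(t)}(e')$ (first sum present only if $v$ is a source), and at a sink $v'$, $Y^{(t+1)}(v',l)=\sum_{e':\mathrm{head}(e')=v'}\epsilon_{e',l}Z^{(t)}(e')$. Writing processes as power series in $D$, the output vector of sink $j$ is $\sum_i \tilde M_{ij}(D)\underline{X_i}(D)$ with $\tilde M_{ij}(D)\in K[D]^{\nu_j\times\mu_i}$. Let $d'_{min}$ be the smallest power of $D$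 occurring in any $\tilde M_{ij}(D)$ and define $M_{ij}(D)=D^{-d'_{min}}\tilde M_{ij}(D)=\sum_{d=0}^{d_{max}}M_{ij}^{(d)}D^d$, and $M_j(D)=[M_{1j}(D)\ \cdots\ M_{sj}(D)]$ ($\nu_j\times\mu$, $\mu=\sum_i\mu_i$). The connections $\mathcal{C}$ specify for each sink $j$ a set of exactly $\nu_j$ input processes it demands; $M_j'(D)$ is the $\nu_j\times\nu_j$ submatrix of $M_j(D)$ formed by the columns of the demanded processes. A feasible network code is an LEC assignment such that (zero interference) every column of $M_j(D)$ corresponding to an input process not demanded by sink $j$ is zero, for every $j$, and (invertibility) $\det M_j'(D)\neq 0$ in $K(D)$ for every $j$. Transform approach: for $\alpha$ of multiplicative order $n$ in an extension of $K$ and $0\le t\le n-1$, let $\hat M_j^{(t)}=\sum_{d=0}^{d_{max}}\alpha^{(n-1-t)d}M_j^{(d)}$ (where $M_j(D)=\sum_d M_j^{(d)}D^d$); this is the instantaneous transfer matrix of generation $t$ obtained after adding a cyclic prefix of length $d_{max}$, applying a length-$n$ DFT at the sources and inverse DFT at the sinks. The LECs together with $\alpha$ form a feasible transform network code if for every $t\in\{0,\dots,n-1\}$ and every sink $j$: every column of $\hat M_j^{(t)}$ corresponding to an undemanded process is zero, and the $\nu_j\times\nu_j$ submatrix of $\hat M_j^{(t)}$ formed by the demanded columns is nonsingular. *)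

From HB Require Import structures.
From mathcomp Require Import all_boot all_order all_algebra.
Unset Printing Implicit Defensive.
Import GRing.Theory.
Local Open Scope ring_scope.

(* Nodes: finType V; links: finType E (parallel links allowed), each link e
   goes from [tl e] to [hd e]. *)
Section Graph.
Variables (V E : finType) (tl hd : E -> V).

Definition adj : rel V := fun u v => [exists e, (tl e == u) && (hd e == v)].

Definition acyclic : Prop := forall e : E, ~~ connect adj (hd e) (tl e).
End Graph.

Section Code.
Variables (L : fieldType) (V E : finType) (tl hd : E -> V).
Variables (s r : nat) (mu : 'I_s -> nat) (nu : 'I_r -> nat).
Variables (src : 'I_s -> V) (snk : 'I_r -> V).

(* input process l of source i *)
Definition proc : finType := {i : 'I_s & 'I_(mu i)}.

(* LECs: alph x e = alpha_{l,e} for x = (i,l) (used only if tl e = src i),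
   beta e' e = beta_{e',e} (used only if hd e' = tl e),
   eps j e' l = epsilon_{e',l} at sink j (used only if hd e' = snk j). *)
Variables (alph : proc -> E -> L) (beta : E -> E -> L)
          (eps : forall j : 'I_r, E -> 'I_(nu j) -> L).

(* D-domain transfer from input process x to link e via paths of exactly
   k+1 links (each link contributes one delay D = 'X). *)
Fixpoint ltf (k : nat) : E -> proc -> {poly L} :=
  fun e x =>
  match k with
  | 0 => if tl e == src (tag x) then (alph x e)%:P * 'X else 0
  | k'.+1 => 'X * \sum_(e' : E | hd e' == tl e) (beta e' e)%:P * ltf k' e' x
  end.

(* Z(e)(D) as a linear function of the input processes: the (unique, the
   graph being acyclic) solution of
   Z(e) = D (sum_l alpha_{l,e} X(tl e,l) + sum_{hd e' = tl e} beta_{e',e} Z(e')),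
   obtained by unrolling (paths have at most #|E| links). *)
Definition link_tf (e : E) (x : proc) : {poly L} := \sum_(k < #|E|) ltf k e x.

(* entry (a, x) of [~M_{i j}(D)], x = (i, l): Y(snk j, a) = D sum eps Z *)
Definition Mtilde (j : 'I_r) (a : 'I_(nu j)) (x : proc) : {poly L} :=
  'X * \sum_(e' : E | hd e' == snk j) (eps j e' a)%:P * link_tf e' x.

Definition pval (q : {poly L}) : nat := find (fun c => c != 0) q.

Definition dmaxT : nat :=
  \max_(j : 'I_r) \max_(a : 'I_(nu j)) \max_(x : proc) (size (Mtilde j a x)).-1.

(* d'_min: smallest power of D occurring in any entry of any ~M_{ij}
   (dmaxT is only a neutral upper bound for the minimum) *)
Definition dmin : nat :=
  \big[minn/dmaxT]_(j : 'I_r) \big[minn/dmaxT]_(a : 'I_(nu j))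
     \big[minn/dmaxT]_(x : proc | Mtilde j a x != 0) pval (Mtilde j a x).

(* M_{ij}(D) = D^{-d'_min} ~M_{ij}(D) *)
Definition Mnet (j : 'I_r) (a : 'I_(nu j)) (x : proc) : {poly L} :=
  \poly_(d < size (Mtilde j a x)) (Mtilde j a x)`_(d + dmin).

Definition dmax : nat :=
  \max_(j : 'I_r) \max_(a : 'I_(nu j)) \max_(x : proc) (size (Mnet j a x)).-1.

(* Connections: sink j demands the nu_j (distinct) processes dem j b *)
Variable dem : forall j : 'I_r, 'I_(nu j) -> proc.

Definition Mprime (j : 'I_r) : 'M[{poly L}]_(nu j) :=
  \matrix_(a, b) Mnet j a (dem j b).

(* feasible network code (det <> 0 in {poly L}, equivalently in K(D)) *)
Definition feasible : Prop :=
  forall j : 'I_r,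
    (forall x : proc, x \notin codom (dem j) ->
       forall a : 'I_(nu j), Mnet j a x = 0)
    /\ \det (Mprime j) != 0.

Definition Mhat (n : nat) (alpha : L) (t : nat) (j : 'I_r) (a : 'I_(nu j))
  (x : proc) : L :=
  \sum_(d < dmax.+1) alpha ^+ ((n.-1 - t) * d) * (Mnet j a x)`_d.

Definition Mhatprime (n : nat) (alpha : L) (t : nat) (j : 'I_r) : 'M[L]_(nu j) :=
  \matrix_(a, b) Mhat n alpha t j a (dem j b).

Definition transform_feasible (n : nat) (alpha : L) : Prop :=
  forall t : nat, (t < n)%N -> forall j : 'I_r,
    (forall x : proc, x \notin codom (dem j) ->
       forall a : 'I_(nu j), Mhat n alpha t j a x = 0)
    /\ \det (Mhatprime n alpha t j) != 0.

Definition fpoly : {poly L} := \prod_(j : 'I_r) \det (Mprime j).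

End Code.

Arguments proc {s} mu.
Arguments feasible {L V E} tl hd {s r mu nu} src snk alph beta eps dem.
Arguments transform_feasible {L V E} tl hd {s r mu nu} src snk alph beta eps dem n alpha.
Arguments fpoly {L V E} tl hd {s r mu nu} src snk alph beta eps dem.
Arguments acyclic {V E} tl hd.

From HB Require Import structures.
From mathcomp Require Import all_boot all_order all_algebra.
Set Implicit Arguments.
Unset Strict Implicit.
Unset Printing Implicit Defensive.
Import GRing.Theory.
Local Open Scope ring_scope.

(* The transfer matrix of generation t is M_j(D) evaluated at
   D = alpha^(n-1-t), so its determinant is det M_j'(alpha^(n-1-t)), and all
   of them are nonzero iff f does not vanish there; as t runs over 0..n-1 so
   does n-1-t.  Zero interference of the transform code is inherited from
   that of the original code, since an undemanded column of M_j(D) is zero. *)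

Lemma horner_exp_coef_sum (R : comNzRingType) (N k : nat) (q : {poly R}) (x : R) :
  (size q <= N)%N -> \sum_(d < N) x ^+ (k * d) * q`_d = q.[x ^+ k].
Proof.
move=> sz_q; rewrite (horner_coef_wide _ sz_q).
by apply: eq_bigr => d _; rewrite mulrC exprM.
Qed.

Lemma det_horner (R : comNzRingType) (n : nat) (A : 'M[{poly R}]_n) (x : R) :
  \det (\matrix_(i, j) (A i j).[x]) = (\det A).[x].
Proof.
rewrite -horner_evalE -det_map_mx; congr (\det _).
by apply/matrixP => i j; rewrite !mxE.
Qed.

Lemma forall_ltn_rev (P : nat -> Prop) (n : nat) :
  (forall t, (t < n)%N -> P (n.-1 - t)%N) <-> (forall t, (t < n)%N -> P t).
Proof.
have rev_lt t : (t < n)%N -> (n.-1 - t < n)%N.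
  by move=> lt_tn; rewrite (leq_ltn_trans (leq_subr t n.-1)) // prednK ?(leq_ltn_trans _ lt_tn).
have revK t : (t < n)%N -> (n.-1 - (n.-1 - t))%N = t.
  by move=> lt_tn; rewrite subKn // -ltnS prednK ?(leq_ltn_trans _ lt_tn).
split=> HP t lt_tn; last exact/HP/rev_lt.
by rewrite -(revK t lt_tn); apply/HP/rev_lt.
Qed.

Section TransformTransfer.

Variables (L : fieldType) (V E : finType) (tl hd : E -> V).
Variables (s r : nat) (mu : 'I_s -> nat) (nu : 'I_r -> nat).
Variables (src : 'I_s -> V) (snk : 'I_r -> V).
Variables (alph : proc mu -> E -> L) (beta : E -> E -> L)
          (eps : forall j : 'I_r, E -> 'I_(nu j) -> L).
Variables (dem : forall j : 'I_r, 'I_(nu j) -> proc mu) (n : nat) (alpha : L).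

Local Notation M := (Mnet L V E tl hd s r mu nu src snk alph beta eps).
Local Notation Mhat := (Mhat L V E tl hd s r mu nu src snk alph beta eps n alpha).
Local Notation dmax := (dmax L V E tl hd s r mu nu src snk alph beta eps).
Local Notation M' := (Mprime L V E tl hd s r mu nu src snk alph beta eps dem).
Local Notation Mhat' :=
  (Mhatprime L V E tl hd s r mu nu src snk alph beta eps dem n alpha).
Local Notation f := (fpoly tl hd src snk alph beta eps dem).

Lemma size_Mnet_le_dmax j a x : (size (M j a x) <= dmax.+1)%N.
Proof.
rewrite (leq_trans (leqSpred _)) // ltnS.
apply: leq_trans (leq_bigmax j); apply: leq_trans (leq_bigmax a).
exact: (leq_bigmax x).
Qed.

Lemma Mhat_horner t j a x : Mhat t j a x = (M j a x).[alpha ^+ (n.-1 - t)].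
Proof. exact/horner_exp_coef_sum/size_Mnet_le_dmax. Qed.

Lemma det_Mhatprime_horner t j :
  \det (Mhat' t j) = (\det (M' j)).[alpha ^+ (n.-1 - t)].
Proof.
rewrite -det_horner; congr (\det _).
by apply/matrixP => a b; rewrite !mxE Mhat_horner.
Qed.

Lemma transform_feasible_horner :
  feasible tl hd src snk alph beta eps dem ->
  transform_feasible tl hd src snk alph beta eps dem n alpha <->
  (forall t, (t < n)%N -> f.[alpha ^+ (n.-1 - t)] != 0).
Proof.
move=> feas; have f_neq0 t :
    f.[alpha ^+ (n.-1 - t)] != 0 = [forall j, (\det (M' j)).[alpha ^+ (n.-1 - t)] != 0].
  rewrite /f horner_prod; apply/prodf_neq0/forallP => [nz j | nz j _]; exact: nz.
split=> [Tfeas t lt_tn | nz_f t lt_tn j].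
  by rewrite f_neq0; apply/forallP => j; rewrite -det_Mhatprime_horner; case: (Tfeas t lt_tn j).
split; last by rewrite det_Mhatprime_horner; move: (nz_f t lt_tn); rewrite f_neq0 => /forallP.
by move=> x undem a; rewrite Mhat_horner (proj1 (feas j) x undem a) horner0.
Qed.

End TransformTransfer.

Theorem lemma2
  (p m a : nat) (L : finFieldType)
  (V E : finType) (tl hd : E -> V)
  (s r : nat) (mu : 'I_s -> nat) (nu : 'I_r -> nat)
  (src : 'I_s -> V) (snk : 'I_r -> V)
  (alph : proc mu -> E -> L) (beta : E -> E -> L)
  (eps : forall j : 'I_r, E -> 'I_(nu j) -> L)
  (dem : forall j : 'I_r, 'I_(nu j) -> proc mu)
  (alpha : L) (n : nat) :
  prime p -> (0 < m)%N -> (0 < a)%N ->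
  #|L| = (p ^ lcmn a m)%N ->
  acyclic tl hd -> injective src -> injective snk ->
  (forall j, injective (dem j)) ->
  (forall x e, alph x e ^+ (p ^ m) = alph x e) ->
  (forall e' e, beta e' e ^+ (p ^ m) = beta e' e) ->
  (forall j e' l, eps j e' l ^+ (p ^ m) = eps j e' l) ->
  feasible tl hd src snk alph beta eps dem ->
  alpha ^+ (p ^ a) = alpha ->
  n.-primitive_root alpha ->
  (transform_feasible tl hd src snk alph beta eps dem n alpha <->
   (forall t : nat, (t < n)%N ->
      (fpoly tl hd src snk alph beta eps dem).[alpha ^+ t] != 0)).
Proof.
move=> _ _ _ _ _ _ _ _ _ _ _ feas _ _.
apply: iff_trans (transform_feasible_horner n alpha feas) _.
exact: (forall_ltn_rev (fun t => (fpoly tl hd src snk alph beta eps dem).[alpha ^+ t] != 0)).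
Qed.
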